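(* Let $$f(x)=c_0+c_1x^{e_1}+c_2x^{e_2}+\cdots+c_tx^{e_t}\in\mathbb{Q}[x]$$ with $c_1,\dots,c_t\in\mathbb{Q}\setminus\{0\}$ and distinct positive integers $e_1,\dots,e_t$. Let $B_T,B_H,B_N\in\mathbb{N}$ satisfy $t\le B_T$, $\mathrm{size}(c_i)\le B_H$ for $0\le i\le t$, and $\log_2\deg f\le B_N$. Then there exist $C_1,C_2\in\mathbb{N}$ with $\log_2 C_1\le 2B_HB_T$ and $\log_2 C_2\le \tfrac12 B_NB_T(B_T-1)$ such that for every prime $p$ with $p\nmid C_1$ and $(p-1)\nmid C_2$, $\tau(f^{(p)})$ is maximal, i.e., $\tau(f^{(p)})=t$.
   Context: For $q\in\mathbb{Q}$ written as $q=a/b$ with $a\in\mathbb{Z}$, $b\in\mathbb{N}$, $\gcd(a,b)=1$, $\mathrm{size}(q)=\lceil\log_2(|a|+1)\rceil+\lceil\log_2(b+1)\rceil+1$. For a prime $p$ and $f\in\mathbb{Q}[x]$, $f^{(p)}\in\mathbb{Z}_p[x]$ denotes the unique polynomial of degree less than $p$ which is congruent to $f$ modulo $x^p-x$ and whose coefficients are reduced modulo $p$. For a univariate polynomial $g$, $\tau(g)$ is the number of distinct non-zero, non-constant terms of $g$. *)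

From HB Require Import structures.
From mathcomp Require Import all_boot all_order all_algebra.
Set Implicit Arguments. Unset Strict Implicit. Unset Printing Implicit Defensive.
Import Order.TTheory GRing.Theory Num.Theory.
Local Open Scope ring_scope.

(* bit size of a rational q = a/b (lowest terms, b>0):
   ceil(log2(|a|+1)) + ceil(log2(b+1)) + 1.
   up_log 2 m is the least e with m <= 2^e, i.e. ceil(log2 m). *)
Definition bitsize (q : rat) : nat :=
  (up_log 2 (`|numq q|%N + 1) + up_log 2 (`|denq q|%N + 1) + 1)%N.

Definition sparse_poly (t : nat) (c0 : rat) (c : 'I_t -> rat) (e : 'I_t -> nat)
  : {poly rat} := c0%:P + \sum_(i < t) c i *: 'X^(e i).

(* reduction of a rational a/b modulo p: a * b^{-1} in F_p
   (junk value 0 when p divides b, since 0^{-1} = 0 in MathComp) *)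
Definition ratFp (p : nat) (q : rat) : 'F_p := (numq q)%:~R / (denq q)%:~R.

(* f^(p): coefficients reduced mod p, then reduced modulo x^p - x
   (the unique polynomial of degree < p congruent to it) *)
Definition polyFp (p : nat) (f : {poly rat}) : {poly 'F_p} :=
  (map_poly (ratFp p) f) %% ('X^p - 'X).

Definition tau (F : nzRingType) (g : {poly F}) : nat :=
  count (fun i => g`_i != 0) (iota 1 (size g).-1).

From HB Require Import structures.
From mathcomp Require Import all_boot all_order all_algebra zify.
Import Order.TTheory GRing.Theory Num.Theory.
Local Open Scope ring_scope.

(* Since x^p = x modulo x^p - x, the monomial x^e (e > 0) reduces to x^r with
   r = ((e - 1) mod (p - 1)) + 1 in [1, p - 1].  Hence all t terms of f survive in f^(p)
   unless p kills a coefficient, i.e. divides the numerator or denominator of some c_i,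
   or two exponents collide, i.e. p - 1 divides some |e_i - e_j|.  Taking C1 the product
   of all these numerators and denominators, and C2 the product of the t(t-1)/2
   differences (each at most deg f), gives the bounds. *)

Definition fold_exp (p e : nat) : nat := (e.-1 %% p.-1).+1.

Lemma fold_exp_eq_dvdn {p a b : nat} : (0 < a)%N -> (0 < b)%N ->
  fold_exp p a = fold_exp p b -> (p.-1 %| `|a - b|)%N.
Proof.
wlog le_ab : a b / (a <= b)%N.
  move=> W; case: (leqP a b) => [le_ab | /ltnW le_ba] a0 b0 eq_ab; first exact: W.
  by rewrite distnC; apply: W.
move=> a0 b0 /succn_inj eq_mod.
have -> : `|a - b|%N = (b.-1 - a.-1)%N by rewrite distnEr //; lia.
by rewrite -eqn_mod_dvd ?eq_mod //; lia.
Qed.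

Lemma size_XpX (R : nzRingType) (p : nat) : (1 < p)%N ->
  size ('X^p - 'X : {poly R}) = p.+1.
Proof. by move=> p_gt1; rewrite size_polyDl size_polyXn // size_polyN size_polyX. Qed.

Lemma Xn_modp_XpX (F : fieldType) (p e : nat) : (1 < p)%N -> (0 < e)%N ->
  ('X^e : {poly F}) %% ('X^p - 'X) = 'X^(fold_exp p e).
Proof.
move=> p_gt1; elim/ltn_ind: e => e IH e_gt0.
have [e_lt_p | p_le_e] := ltnP e p.
  rewrite /fold_exp modn_small; last by lia.
  by rewrite prednK // modp_small // size_XpX // size_polyXn; lia.
have -> : ('X^e : {poly F}) = 'X^(e - p) * ('X^p - 'X) + 'X^(e - p.-1).
  rewrite mulrBr -exprD subnK // -exprSr.
  have -> : (e - p.-1 = (e - p).+1)%N by lia.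
  by rewrite subrK.
rewrite modpD modp_mull add0r IH; [|lia|lia].
by rewrite /fold_exp -(modnDr _ p.-1); have -> : ((e - p.-1).-1 + p.-1 = e.-1)%N by lia.
Qed.

Section SparsePolynomial.

Context {t : nat} {e : 'I_t -> nat}.
Hypothesis e_gt0 : forall i, (0 < e i)%N.

Lemma coef_sparse (R : nzRingType) (a0 : R) (a : 'I_t -> R) k :
  injective e ->
  (a0%:P + \sum_(i < t) a i *: 'X^(e i))`_k =
  if k == 0%N then a0 else if [pick i | e i == k] is Some i then a i else 0.
Proof.
move=> e_inj; rewrite coefD coefC coef_sum.
under eq_bigr do rewrite coefZ coefXn.
case: eqP => [->|k_neq0].
  by rewrite big1 ?addr0 // => i _; rewrite (ltn_eqF (e_gt0 i)) mulr0.
rewrite add0r; case: pickP => [i /eqP ei_k | no_i].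
  rewrite (bigD1 i) //= ei_k eqxx mulr1 big1 ?addr0 // => j j_neq_i.
  case: eqP => [k_ej|]; rewrite ?mulr0 //.
  by case/eqP: j_neq_i; apply: e_inj; rewrite ei_k k_ej.
by rewrite big1 // => i _; rewrite eq_sym no_i mulr0.
Qed.

Lemma coef_sparse_exp (R : nzRingType) (a0 : R) (a : 'I_t -> R) i :
  injective e -> (a0%:P + \sum_(j < t) a j *: 'X^(e j))`_(e i) = a i.
Proof.
move=> e_inj; rewrite coef_sparse // (gtn_eqF (e_gt0 i)).
by case: pickP => [j /eqP /e_inj -> // | /(_ i)]; rewrite eqxx.
Qed.

Lemma sparse_exp_lt_size {R : nzRingType} (a0 : R) {a : 'I_t -> R} {i : 'I_t} :
  injective e -> a i != 0 -> (e i < size (a0%:P + \sum_(j < t) a j *: 'X^(e j))%R)%N.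
Proof.
move=> e_inj; rewrite ltnNge; apply: contraL => /(nth_default 0).
by rewrite coef_sparse_exp // => ->; rewrite eqxx.
Qed.

Lemma map_poly_sparse (R S : nzRingType) (f : R -> S) (a0 : R) (a : 'I_t -> R) :
  f 0 = 0 -> injective e ->
  map_poly f (a0%:P + \sum_(i < t) a i *: 'X^(e i)) =
  (f a0)%:P + \sum_(i < t) f (a i) *: 'X^(e i).
Proof.
move=> f0 e_inj; apply/polyP => k.
rewrite coef_map_id0 // !coef_sparse //.
by case: (k == 0%N) => //; case: pickP.
Qed.

Lemma modp_sparse (F : fieldType) (p : nat) (a0 : F) (a : 'I_t -> F) :
  (1 < p)%N ->
  (a0%:P + \sum_(i < t) a i *: 'X^(e i)) %% ('X^p - 'X) =
  a0%:P + \sum_(i < t) a i *: 'X^(fold_exp p (e i)).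
Proof.
move=> p_gt1.
rewrite modpD (big_morph (fun q => q %% ('X^p - 'X)) (modpD _) (mod0p _)).
rewrite modp_small; last first.
  by rewrite size_XpX // size_polyC; case: (_ != 0) => /=; lia.
by congr (_ + _); apply: eq_bigr => i _; rewrite modpZl Xn_modp_XpX.
Qed.

Lemma tau_sparse (R : nzRingType) (a0 : R) (a : 'I_t -> R) :
  injective e -> (forall i, a i != 0) ->
  tau (a0%:P + \sum_(i < t) a i *: 'X^(e i)) = t.
Proof.
move=> e_inj a_neq0; set g := _ + _.
have coef_gP k : (0 < k)%N -> (g`_k != 0) = (k \in [seq e i | i <- enum 'I_t]).
  move=> k_gt0; rewrite coef_sparse // (gtn_eqF k_gt0).
  case: pickP => [j /eqP <- | no_j]; first by rewrite a_neq0 map_f ?mem_enum.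
  by rewrite eqxx; apply/esym/mapP => -[j _ ej_k]; move: (no_j j); rewrite ej_k eqxx.
rewrite /tau (@eq_in_count _ _ (mem [seq e i | i <- enum 'I_t])); last first.
  by move=> k; rewrite mem_iota => /andP[k_gt0 _]; apply: coef_gP.
rewrite -size_filter (perm_size (@uniq_perm _ _ [seq e i | i <- enum 'I_t] _ _ _)).
- by rewrite size_map size_enum_ord.
- by rewrite filter_uniq // iota_uniq.
- by rewrite (map_inj_uniq e_inj) enum_uniq.
move=> k; rewrite mem_filter andb_idr // => /mapP[i _ ->].
have lt_size := sparse_exp_lt_size a0 e_inj (a_neq0 i).
by rewrite mem_iota e_gt0 add1n prednK ?lt_size // (leq_ltn_trans _ lt_size).
Qed.

End SparsePolynomial.

Section DistanceProduct.

Variable s : seq nat.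

Definition dist_prod : nat :=
  \prod_(j < size s) \prod_(i < j) `|nth 0 s i - nth 0 s j|.

Lemma dist_prod_gt0 : uniq s -> (0 < dist_prod)%N.
Proof.
move=> s_uniq; rewrite prodn_gt0 // => j; rewrite prodn_gt0 // => i.
have lt_is := ltn_trans (ltn_ord i) (ltn_ord j).
by rewrite lt0n distn_eq0 nth_uniq // (ltn_eqF (ltn_ord i)).
Qed.

Lemma dvdn_dist_prod x y : x \in s -> y \in s -> x != y -> (`|x - y| %| dist_prod)%N.
Proof.
wlog lt_xy : x y / (index x s < index y s)%N.
  move=> W xs ys neq_xy.
  have : index x s != index y s by apply: contra neq_xy => /eqP/index_inj ->.
  rewrite neq_ltn => /orP[lt | lt]; first exact: W.
  by rewrite distnC; apply: W; rewrite // eq_sym.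
move=> xs ys _; have lt_ys : (index y s < size s)%N by rewrite index_mem.
rewrite -(nth_index 0 xs) -(nth_index 0 ys) /dist_prod (bigD1 (Ordinal lt_ys)) //=.
by apply: dvdn_mulr; rewrite (bigD1 (Ordinal lt_xy)) //= dvdn_mulr.
Qed.

Lemma dist_prod_le M : all (fun x => x <= M)%N s -> (dist_prod <= M ^ 'C(size s, 2))%N.
Proof.
move=> /(all_nthP 0%N) s_le.
apply: (leq_trans (@leq_prod _ _ _ _ (fun j : 'I_(size s) => M ^ j)%N _)).
  move=> j _; rewrite -[X in (_ <= M ^ X)%N]card_ord -prod_nat_const leq_prod // => i _.
  have := s_le i (ltn_trans (ltn_ord i) (ltn_ord j)); have := s_le j (ltn_ord j); lia.
by rewrite -expn_sum -(big_mkord xpredT (fun j => j)) bin2_sum.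
Qed.

End DistanceProduct.

Lemma leq_mul_bin2 k n m : (n <= m)%N -> (k * 'C(n, 2) <= (k * m * (m - 1)) %/ 2)%N.
Proof.
move=> le_nm; rewrite bin2 -divn2 leq_divRL // -!mulnA leq_mul2l.
apply/orP; right; apply: leq_trans (leq_divM _ 2) _.
by apply: leq_mul => //; lia.
Qed.

Lemma numden_le_bitsize (q : rat) : (`|numq q| * `|denq q| <= 2 ^ bitsize q)%N.
Proof.
have num_le := @up_logP 2 (`|numq q| + 1)%N isT.
have den_le := @up_logP 2 (`|denq q| + 1)%N isT.
apply: (leq_trans (leq_mul (leq_trans (leq_addr 1 _) num_le) (leq_trans (leq_addr 1 _) den_le))).
by rewrite -expnD leq_pexp2l // /bitsize; lia.
Qed.

Lemma prod_numden_le {t : nat} (c : 'I_t -> rat) B : (forall i, bitsize (c i) <= B)%N ->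
  (\prod_(i < t) (`|numq (c i)| * `|denq (c i)|) <= 2 ^ (B * t))%N.
Proof.
move=> c_size; rewrite expnM -[X in (_ <= _ ^ X)%N]card_ord -prod_nat_const leq_prod // => i _.
by apply: leq_trans (numden_le_bitsize _) _; rewrite leq_pexp2l.
Qed.

Lemma ratFp_neq0 (p : nat) (q : rat) : prime p ->
  ~~ (p %| `|numq q| * `|denq q|)%N -> ratFp p q != 0.
Proof.
move=> p_pr; rewrite Euclid_dvdM // negb_or => /andP[p_num p_den].
have intr_Fp_neq0 (z : int) : ~~ (p %| `|z|)%N -> (z%:~R : 'F_p) != 0.
  rewrite (dvdn_pcharf (pchar_Fp p_pr)); case: z => m //=.
  by rewrite NegzE mulrNz oppr_eq0.
by rewrite /ratFp mulf_neq0 ?invr_neq0 ?intr_Fp_neq0.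
Qed.

Theorem mainTheorem3 (t : nat) (c0 : rat) (c : 'I_t -> rat) (e : 'I_t -> nat)
    (BT BH BN : nat) :
  (forall i, c i != 0) ->
  injective e ->
  (forall i, (0 < e i)%N) ->
  (t <= BT)%N ->
  (bitsize c0 <= BH)%N ->
  (forall i, bitsize (c i) <= BH)%N ->
  ((size (sparse_poly c0 c e)).-1 <= 2 ^ BN)%N ->
  exists C1 C2 : nat,
    [/\ (0 < C1)%N, (C1 <= 2 ^ (2 * BH * BT))%N,
        (0 < C2)%N, (C2 <= 2 ^ ((BN * BT * (BT - 1)) %/ 2))%N &
        forall p : nat, prime p -> ~~ (p %| C1)%N -> ~~ (p.-1 %| C2)%N ->
          tau (polyFp p (sparse_poly c0 c e)) = t].
Proof.
move=> c_neq0 e_inj e_gt0 t_le _ c_size deg_le.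
pose C1 := (\prod_(i < t) (`|numq (c i)| * `|denq (c i)|))%N.
pose exps := [seq e i | i <- enum 'I_t].
have e_le i : (e i <= 2 ^ BN)%N.
  have lt_size := sparse_exp_lt_size e_gt0 c0 e_inj (c_neq0 i).
  by apply: leq_trans deg_le; rewrite -ltnS prednK ?(leq_ltn_trans _ lt_size).
have size_exps : size exps = t by rewrite size_map size_enum_ord.
exists C1, (dist_prod exps); split.
- by rewrite prodn_gt0 // => i; rewrite muln_gt0 !absz_gt0 numq_eq0 c_neq0 denq_neq0.
- by apply: leq_trans (prod_numden_le c BH c_size) _; rewrite leq_pexp2l //; nia.
- by rewrite dist_prod_gt0 // (map_inj_uniq e_inj) enum_uniq.
- have exps_le : all (fun x => x <= 2 ^ BN)%N exps by apply/allP => _ /mapP[i _ ->].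
  apply: leq_trans (dist_prod_le _ _ exps_le) _.
  by rewrite size_exps -expnM leq_pexp2l // leq_mul_bin2.
move=> p p_pr p_C1 p_C2.
have cp_neq0 i : ratFp p (c i) != 0.
  apply: ratFp_neq0 => //; apply: contra p_C1 => /dvdn_trans; apply.
  by rewrite /C1 (bigD1 i) //= dvdn_mulr.
have fold_inj : injective (fun i => fold_exp p (e i)).
  move=> i j /(fold_exp_eq_dvdn (e_gt0 i) (e_gt0 j)) dvd_ij.
  apply/eqP; apply: contraNT p_C2 => neq_ij; apply: dvdn_trans dvd_ij _.
  by rewrite dvdn_dist_prod ?map_f ?mem_enum ?(inj_eq e_inj).
rewrite /polyFp /sparse_poly map_poly_sparse ?modp_sparse ?prime_gt1 ?tau_sparse //.
by rewrite /ratFp mul0r.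
Qed.
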